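(* Let $m\in\mathbb{N}$ and let $\lambda$ be a nonzero real number. For all integers $n,l\ge0$, \[ D_{m,\lambda}(n+l,x)=\sum_{j=0}^{l}\sum_{k=0}^{n}\binom{n}{k}W_{m,\lambda}(l,j)\,x^{j}\,(mj-l\lambda)_{n-k,\lambda}\,D_{m,\lambda}(k,x) \] as polynomials in $x$; equivalently, with $a^{+}$ the boson creation operator, \[ D_{m,\lambda}(n+l,m a^{+})=\sum_{j=0}^{l}\sum_{k=0}^{n}\binom{n}{k}W_{m,\lambda}(l,j)\,m^{j}(a^{+})^{j}(mj-l\lambda)_{n-k,\lambda}D_{m,\lambda}(k,m a^{+}). \]
   Context: $(x)_{0,\lambda}=1$ and $(x)_{n,\lambda}=x(x-\lambda)\cdots(x-(n-1)\lambda)$ for $n\ge1$; $(x)_k=x(x-1)\cdots(x-k+1)$. For $m\in\mathbb{N}$, the degenerate Whitney numbers of the second kind $W_{m,\lambda}(n,k)$ are defined by $(mx+1)_{n,\lambda}=\sum_{k=0}^{n}W_{m,\lambda}(n,k)m^{k}(x)_k$ ($n\ge0$), and the degenerate Dowling polynomials are $D_{m,\lambda}(n,x)=\sum_{k=0}^{n}W_{m,\lambda}(n,k)x^{k}$. *)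

From HB Require Import structures.
From mathcomp Require Import all_boot all_order all_algebra.
From mathcomp Require Import reals.
Set Implicit Arguments. Unset Strict Implicit. Unset Printing Implicit Defensive.
Import GRing.Theory Num.Theory.
Local Open Scope ring_scope.

Definition dfall {R : ringType} (x lam : R) (n : nat) : R :=
  \prod_(i < n) (x - i%:R * lam).

Definition ffall {R : ringType} (x : R) (k : nat) : R :=
  \prod_(i < k) (x - i%:R).

Definition is_degWhitney {R : ringType} (m : nat) (lam : R)
  (W : nat -> nat -> R) : Prop :=
  forall (n : nat) (x : R),
    dfall (m%:R * x + 1) lam n = \sum_(k < n.+1) W n k * m%:R ^+ k * ffall x k.

Definition degDowling {R : ringType} (W : nat -> nat -> R) (n : nat) : {poly R} :=
  \sum_(k < n.+1) W n k *: 'X^k.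

From HB Require Import structures.
From mathcomp Require Import all_boot all_order all_algebra.
From mathcomp Require Import reals.
From mathcomp Require Import ring.
Set Implicit Arguments. Unset Strict Implicit. Unset Printing Implicit Defensive.
Import GRing.Theory Num.Theory.
Local Open Scope ring_scope.

(* Both sides are compared through the linear functional [ffeval m x] sending
   ['X^k] to [m^k (x)_k]. By definition of the Whitney numbers it maps the
   Dowling polynomial [D(n)] to [(m x + 1)_{n,lam}], and it maps ['X^j * p] to
   [m^j (x)_j] times the value of [p] at [x - j]. Evaluating the right-hand side
   therefore gives, after summing over [j] with the defining identity of [W l j],
   [(m x + 1)_{l,lam} (m x + 1 - l lam)_{n,lam}], which is
   [(m x + 1)_{n+l,lam}] by splitting the degenerate falling factorial; the
   inner sum over [k] is the degenerate Vandermonde identity applied to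
   [m x + 1 - l lam = (m (x - j) + 1) + (m j - l lam)]. Finally, [ffeval m x]
   at all [x] determines a polynomial when [m > 0]: evaluating at [x = i] kills
   every monomial of degree above [i]. *)

Section DegenerateFalling.
Variable R : nzRingType.

Lemma dfallS (x lam : R) n : dfall x lam n.+1 = dfall x lam n * (x - n%:R * lam).
Proof. by rewrite /dfall big_ord_recr. Qed.

Lemma dfallD (x lam : R) l n :
  dfall x lam (l + n) = dfall x lam l * dfall (x - l%:R * lam) lam n.
Proof.
rewrite /dfall big_split_ord /=; congr (_ * _); apply: eq_bigr => k _.
by rewrite natrD mulrDl opprD addrA.
Qed.

Lemma ffall_dfall (x : R) k : ffall x k = dfall x 1 k.
Proof. by apply: eq_bigr => i _; rewrite mulr1. Qed.

Lemma ffallD (x : R) j i : ffall x (j + i) = ffall x j * ffall (x - j%:R) i.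
Proof. by rewrite !ffall_dfall dfallD mulr1. Qed.

End DegenerateFalling.

Lemma ffall_nat_eq0 (R : comNzRingType) i k : (i < k)%N -> ffall (i%:R : R) k = 0.
Proof. by move=> lt_ik; rewrite /ffall (bigD1 (Ordinal lt_ik)) //= subrr mul0r. Qed.

Lemma ffall_nat_neq0 (R : numDomainType) i : ffall (i%:R : R) i != 0.
Proof.
apply/prodf_neq0 => t _.
by rewrite -natrB ?(ltnW (ltn_ord t)) // pnatr_eq0 subn_eq0 -ltnNge.
Qed.

Lemma dfallDn (R : comNzRingType) (a b lam : R) n :
  dfall (a + b) lam n =
  \sum_(k < n.+1) 'C(n, k)%:R * dfall a lam k * dfall b lam (n - k).
Proof.
elim: n => [|n IH]; first by rewrite big_ord1 /dfall !big_ord0 bin0 !mulr1.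
rewrite dfallS IH mulr_suml.
(* [a + b - n lam = (a - k lam) + (b - (n - k) lam)] splits the k-th term in two. *)
have -> : \sum_(k < n.+1) 'C(n, k)%:R * dfall a lam k * dfall b lam (n - k) *
    (a + b - n%:R * lam) =
  \sum_(k < n.+1) 'C(n, k)%:R * dfall a lam k.+1 * dfall b lam (n - k) +
  \sum_(k < n.+1) 'C(n, k)%:R * dfall a lam k * dfall b lam (n.+1 - k).
  rewrite -big_split; apply: eq_bigr => k _ /=.
  have le_kn : (k <= n)%N by rewrite -ltnS.
  by rewrite dfallS subSn // dfallS natrB //; ring.
rewrite [RHS]big_ord_recl [X in _ + X = _]big_ord_recl /= bin0 subn0 mul1r.
under [in RHS]eq_bigr => k _ do rewrite /bump /= binS natrD !mulrDl subSS.
rewrite big_split /= [X in _ = _ + (X + _)]big_ord_recr /= bin_small //.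
rewrite !mul0r addr0.
under [X in _ + (_ + X) = _]eq_bigr => k _ do rewrite /bump /= subSS.
rewrite addrCA; congr (_ + _); rewrite addrC; congr (_ + _).
Qed.

Section CoefSum.
Variables (R : comNzRingType) (c : nat -> R).
Implicit Types p q : {poly R}.

Definition coef_sum p : R := \sum_(i < size p) p`_i * c i.

Lemma coef_sum_widen N p : (size p <= N)%N ->
  coef_sum p = \sum_(i < N) p`_i * c i.
Proof.
move=> le_pN; rewrite /coef_sum (big_ord_widen N (fun i => p`_i * c i) le_pN).
rewrite big_mkcond; apply: eq_bigr => i _; case: ifP => // /negbT.
by rewrite -leqNgt => /(nth_default 0) ->; rewrite mul0r.
Qed.

Lemma coef_sum_is_linear : linear_for *%R coef_sum.
Proof.
move=> a p q; set N := maxn (size (a *: p + q)) (maxn (size p) (size q)).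
rewrite !(@coef_sum_widen N) ?leq_maxl //; last 2 first.
- by rewrite (leq_trans _ (leq_maxr _ _)) ?leq_maxr.
- by rewrite (leq_trans _ (leq_maxr _ _)) ?leq_maxl.
rewrite mulr_sumr -big_split; apply: eq_bigr => i _.
by rewrite coefD coefZ mulrDl mulrA.
Qed.

HB.instance Definition _ :=
  GRing.isLinear.Build R {poly R} R *%R coef_sum coef_sum_is_linear.

Lemma coef_sum1 : coef_sum 1 = c 0.
Proof. by rewrite /coef_sum size_poly1 big_ord1 coef1 mul1r. Qed.

End CoefSum.

Lemma coef_sumXnM (R : comNzRingType) (c : nat -> R) j (p : {poly R}) :
  coef_sum c ('X^j * p) = coef_sum (fun i => c (j + i)) p.
Proof.
have le_size : (size ('X^j * p)%R <= j + size p)%N.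
  by rewrite (leq_trans (size_polyMleq _ _)) // size_polyXn.
rewrite (coef_sum_widen _ le_size) big_split_ord /= big1 ?add0r; last first.
  by move=> i _; rewrite coefXnM ltn_ord mul0r.
by apply: eq_bigr => i _; rewrite coefXnM ltnNge leq_addr addKn.
Qed.

Definition ffeval (R : comNzRingType) (m : nat) (x : R) : {poly R} -> R :=
  coef_sum (fun k => m%:R ^+ k * ffall x k).

HB.instance Definition _ (R : comNzRingType) m (x : R) :=
  GRing.Linear.on (ffeval m x).

Lemma ffevalXnM (R : comNzRingType) m (x : R) j p :
  ffeval m x ('X^j * p) = m%:R ^+ j * ffall x j * ffeval m (x - j%:R) p.
Proof.
rewrite /ffeval coef_sumXnM /coef_sum mulr_sumr; apply: eq_bigr => i _.
by rewrite exprD ffallD; ring.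
Qed.

Lemma ffeval1 (R : comNzRingType) m (x : R) : ffeval m x 1 = 1.
Proof. by rewrite /ffeval coef_sum1 expr0 /ffall big_ord0 mulr1. Qed.

Lemma ffeval_degDowling (R : comNzRingType) m (lam : R) W n x :
  is_degWhitney m lam W -> ffeval m x (degDowling W n) = dfall (m%:R * x + 1) lam n.
Proof.
move=> hW; rewrite hW /degDowling raddf_sum /=; apply: eq_bigr => k _.
by rewrite linearZ_LR /= -(mulr1 'X^k) ffevalXnM ffeval1 mulr1 mulrA.
Qed.

Lemma ffeval_eq0 (R : numDomainType) m (p : {poly R}) : (0 < m)%N ->
  (forall x, ffeval m x p = 0) -> p = 0.
Proof.
move=> m_gt0 p0; apply/polyP => i; rewrite coef0.
elim/ltn_ind: i => i IH.
have lt_i : (i < maxn (size p) i.+1)%N by rewrite leq_max ltnSn orbT.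
have := p0 i%:R; rewrite /ffeval (coef_sum_widen _ (leq_maxl (size p) i.+1)).
rewrite (bigD1 (Ordinal lt_i)) //= big1 ?addr0 => [|k /eqP neq_ki].
  move/eqP; rewrite !mulf_eq0 (negbTE (ffall_nat_neq0 _ _)) orbF expf_eq0.
  by rewrite pnatr_eq0 (negbTE (lt0n_neq0 m_gt0)) andbF orbF => /eqP.
case: (ltngtP k i) => [lt_ki|lt_ik|eq_ki].
- by rewrite IH // mul0r.
- by rewrite ffall_nat_eq0 // !mulr0.
- by case: neq_ki; apply: val_inj.
Qed.

Lemma ffeval_inj (R : numDomainType) m (p q : {poly R}) : (0 < m)%N ->
  (forall x, ffeval m x p = ffeval m x q) -> p = q.
Proof.
move=> m_gt0 eq_pq; apply/subr0_eq/(ffeval_eq0 m_gt0) => x.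
by rewrite raddfB /= eq_pq subrr.
Qed.

Theorem theorem3p1 (R : realType) (m : nat) (lam : R) (W : nat -> nat -> R)
  (hm : (0 < m)%N) (hlam : lam != 0) (hW : is_degWhitney m lam W)
  (n l : nat) :
  degDowling W (n + l) =
  \sum_(j < l.+1) \sum_(k < n.+1)
     ('C(n, k)%:R * W l j * dfall ((m * j)%:R - l%:R * lam) lam (n - k))
       *: ('X^j * degDowling W k).
Proof.
apply: (ffeval_inj hm) => x; rewrite (ffeval_degDowling _ _ hW) raddf_sum /=.
rewrite addnC dfallD hW mulr_suml; apply: eq_bigr => j _.
rewrite raddf_sum /=.
have -> : m%:R * x + 1 - l%:R * lam =
    (m%:R * (x - j%:R) + 1) + ((m * j)%:R - l%:R * lam) by rewrite natrM; ring.
rewrite dfallDn mulr_sumr; apply: eq_bigr => k _.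
rewrite linearZ_LR /= ffevalXnM (ffeval_degDowling _ _ hW).
set A := dfall _ lam k; set B := dfall _ lam (n - k); set C := ffall x j.
by ring.
Qed.
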